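(* Let $X_1$ be a real random variable with cumulative distribution function $F$ and mean $\mu$, let $p\geq1$ and suppose $\nu_p:=(\mathbb{E}|X_1-\mu|^p)^{1/p}<+\infty$. For $\xi>0$ define \[\rho_{F,p}(\xi):=\sup\left\{\frac{(\mathbb{E}[|X_1-\mu|^pZ])^{1/p}}{\nu_p}:\ Z \text{ a random variable with }0\leq Z\leq1,\ \mathbb{E}Z\leq\xi\right\}\] when $\nu_p>0$, and $\rho_{F,p}(\xi)=0$ otherwise (the supremum is over random variables $Z$ defined jointly with $X_1$). Then $0\leq\rho_{F,p}\leq1$, $\lim_{\xi\to0}\rho_{F,p}(\xi)=0$, and \[\forall r>0:\quad \Pr(|X_1-\mu|>r\nu_p)\leq\frac{\rho_{F,p}(r^{-p})^p}{r^p}.\] Finally, if $\nu_q\leq\kappa_{p,q}\nu_p<+\infty$ for some $q>p$ (with $\nu_q:=(\mathbb{E}|X_1-\mu|^q)^{1/q}$), then $\rho_{F,p}(\xi)\leq\kappa_{p,q}\,\xi^{\frac1p-\frac1q}$. *)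

From HB Require Import structures.
From mathcomp Require Import all_boot all_order all_algebra.
From mathcomp Require Import all_classical all_reals all_analysis.
Set Implicit Arguments. Unset Strict Implicit. Unset Printing Implicit Defensive.
Import Order.TTheory GRing.Theory Num.Theory.
Local Open Scope classical_set_scope.
Local Open Scope ring_scope.

Section defs.
Context {d : measure_display} {T : measurableType d} {R : realType}.
Variable P : probability T R.

(* mu = E X (real number; meaningful when X is integrable) *)
Definition mean (X : T -> R) : R := fine ('E_P[X])%E.

Definition cmoment (X : T -> R) (p : R) : \bar R :=
  (\int[P]_x (`|X x - mean X| `^ p)%:E)%E.

(* nu_p = (E |X - mu|^p)^(1/p) (meaningful when cmoment X p < +oo) *)
Definition nu (X : T -> R) (p : R) : R := fine (cmoment X p) `^ p^-1.

Definition rho_set (X : T -> R) (p xi : R) : set R :=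
  [set y | exists Z : T -> R,
      [/\ measurable_fun [set: T] Z,
          (forall t, 0 <= Z t <= 1),
          ('E_P[Z] <= xi%:E)%E &
          y = fine (\int[P]_x ((`|X x - mean X| `^ p * Z x)%:E))%E `^ p^-1
              / nu X p]].

Definition rho (X : T -> R) (p xi : R) : R :=
  if 0 < nu X p then sup (rho_set X p xi) else 0.

End defs.

From HB Require Import structures.
From mathcomp Require Import all_boot all_order all_algebra.
From mathcomp Require Import all_classical all_reals all_analysis.
From mathcomp Require Import measurable_realfun ring.
Set Implicit Arguments. Unset Strict Implicit.
Import Order.TTheory GRing.Theory Num.Theory.
Local Open Scope classical_set_scope.
Local Open Scope ring_scope.

(* Put W := |X - mu|^p, so that E W = nu_p^p and the quantities in the supremum
   defining rho(xi) are (E[W Z])^(1/p) / nu_p; since E[W Z] <= E W they lie in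
   [0, 1].  As W is integrable, E[W Z] is small uniformly over the weights Z with
   small E Z (bound W Z by W 1_{Z >= s} + s W and apply Markov to Z), so rho
   tends to 0.  The weight Z = 1_{|X - mu| > r nu_p} has E Z <= r^-p and, by
   Markov, E[W Z] >= (r nu_p)^p P(|X - mu| > r nu_p): this is the tail bound.
   Hoelder with exponents q/p and q/(q-p), together with Z^(q/(q-p)) <= Z, gives
   E[W Z] <= nu_q^p xi^(1 - p/q).  If nu_p = 0 then X = mu almost surely and
   rho = 0 by definition. *)

Section weighted_integrals.
Context d (T : measurableType d) (R : realType) (mu : {measure set T -> \bar R}).
Local Open Scope ereal_scope.

Lemma integral_mul_weight_split (f Z : T -> R) (s : R) :
  measurable_fun setT f -> measurable_fun setT Z ->
  (forall x, (0 <= f x)%R) -> (forall x, (0 <= Z x <= 1)%R) -> (0 <= s)%R ->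
  \int[mu]_x (f x * Z x)%:E <=
    \int[mu]_(x in [set x | (s <= Z x)%R]) (f x)%:E + s%:E * \int[mu]_x (f x)%:E.
Proof.
move=> mf mZ f0 Z01 s0; set A := [set x | _].
have mA : measurable A by rewrite -[A]setTI /A -preimage_itvcy; exact: mZ.
have mfA : measurable_fun setT (fun x => f x * \1_A x)%R.
  by apply: measurable_funM => //; exact: measurable_indic.
have -> : \int[mu]_(x in A) (f x)%:E = \int[mu]_x (f x * \1_A x)%:E.
  by rewrite integral_mkcond restrict_EFin patch_indic.
have f0E x : setT x -> 0 <= (f x)%:E by rewrite lee_fin.
rewrite -(ge0_integralZl_EFin mu measurableT f0E ((measurable_EFinP _ _).2 mf) s0).
rewrite -ge0_integralD//; last 4 first.
- by move=> x _; rewrite lee_fin mulr_ge0.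
- exact/measurable_EFinP.
- by move=> x _; rewrite -EFinM lee_fin mulr_ge0.
- by apply/measurable_EFinP; exact: measurable_funM.
apply: ge0_le_integral => //.
- by move=> x _; rewrite lee_fin mulr_ge0//; case/andP: (Z01 x).
- by apply/measurable_EFinP; exact: measurable_funM.
- by apply: emeasurable_funD => //; apply/measurable_EFinP; exact: measurable_funM.
move=> x _; have [Z0 Z1] := andP (Z01 x).
rewrite -EFinM -EFinD lee_fin indicE; case: (boolP (x \in A)) => [_ | xA].
  by rewrite mulr1 -[leLHS]addr0 lerD ?ler_piMr ?mulr_ge0.
rewrite mulr0 add0r mulrC ler_wpM2r// ltW// ltNge; apply: contra xA => sZ.
exact: mem_set.
Qed.

Lemma integral_mul_weight_continuous (f : T -> R) :
  (forall x, (0 <= f x)%R) -> mu.-integrable setT (EFin \o f) ->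
  forall e : R, (0 < e)%R -> exists2 delta : R, (0 < delta)%R &
  forall Z : T -> R, measurable_fun setT Z -> (forall x, (0 <= Z x <= 1)%R) ->
    \int[mu]_x (Z x)%:E <= delta%:E -> \int[mu]_x (f x * Z x)%:E <= e%:E.
Proof.
move=> f0 intf e e0.
have mf : measurable_fun setT f by exact/measurable_EFinP/(measurable_int mu intf).
set c := fine (\int[mu]_x (f x)%:E).
have intfE : \int[mu]_x (f x)%:E = c%:E by rewrite fineK// integrable_fin_num.
have c0 : (0 <= c)%R by rewrite fine_ge0// integral_ge0// => x _; rewrite lee_fin.
pose s := (e / 2 / (c + 1))%R.
have s0 : (0 < s)%R by rewrite !divr_gt0// ltr_wpDl.
have sc : (s * c <= e / 2)%R.
  rewrite /s mulrAC ler_pdivrMr ?ltr_wpDl// ler_wpM2l ?lerDl//.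
  by rewrite divr_ge0// ltW.
have [r [r0 smallA]] := integral_normr_continuous intf (divr_gt0 e0 (ltr0n _ 2)).
exists (s * r / 2)%R => [|Z mZ Z01 intZ]; first by rewrite !divr_gt0// mulr_gt0.
have Z0 x : (0 <= Z x)%R by case/andP: (Z01 x).
pose A := [set x | (s <= Z x)%R].
have mA : measurable A by rewrite -[A]setTI /A -preimage_itvcy; exact: mZ.
have muA : mu A < r%:E.
  have := le_integral_abse mu measurableT ((measurable_EFinP _ _).2 mZ) s0.
  have -> : [set x | s%:E <= `|(EFin \o Z) x|] = A.
    by apply/seteqP; split => x /=; rewrite lee_fin ger0_norm.
  have -> : \int[mu]_x `|(EFin \o Z) x| = \int[mu]_x (Z x)%:E.
    by apply: eq_integral => x _; rewrite /comp abse_EFin ger0_norm.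
  rewrite setTI => /le_trans/(_ intZ).
  rewrite -lee_pdivlMl// -EFinM mulrA mulKf ?gt_eqF// => /le_lt_trans; apply.
  by rewrite lte_fin ltr_pdivrMr// ltr_pMr// ltr1n.
have intA : \int[mu]_(x in A) (f x)%:E <= (e / 2)%:E.
  have intAf : mu.-integrable A (EFin \o f) by exact: integrableS intf.
  rewrite -[X in X <= _]fineK ?integrable_fin_num// lee_fin ltW//.
  move: (smallA A mA muA); rewrite (@eq_Rintegral _ _ _ _ A f)// => x _.
  by rewrite ger0_norm.
apply: le_trans (integral_mul_weight_split mf mZ f0 Z01 (ltW s0)) _.
by rewrite intfE -EFinM (splitr e) EFinD leeD.
Qed.

Lemma hoelder_weight (f Z : T -> R) (a b : R) :
  measurable_fun setT f -> measurable_fun setT Z ->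
  (forall x, (0 <= f x)%R) -> (forall x, (0 <= Z x <= 1)%R) ->
  (0 < a)%R -> (0 < b)%R -> (a^-1 + b^-1 = 1)%R ->
  \int[mu]_x (f x * Z x)%:E <=
    (\int[mu]_x (f x `^ a)%:E) `^ a^-1 * (\int[mu]_x (Z x)%:E) `^ b^-1.
Proof.
move=> mf mZ f0 Z01 a0 b0 ab.
have Z0 x : (0 <= Z x)%R by case/andP: (Z01 x).
have b1 : (1 <= b)%R.
  by rewrite -[b]invrK -invr1 lef_pV2 ?posrE ?invr_gt0// -ab lerDr invr_ge0 ltW.
have normE (g : T -> R) r : (forall x, (0 <= g x)%R) ->
    \int[mu]_x `|(EFin \o g) x| `^ r = \int[mu]_x (g x `^ r)%:E.
  move=> g0; apply: eq_integral => x _.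
  by rewrite /comp abse_EFin ger0_norm// poweR_EFin.
have := hoelder mu mf mZ a0 b0 ab.
rewrite Lnorm1 unlock !normE//.
have -> : \int[mu]_x `|(EFin \o (f \* Z)%R) x| = \int[mu]_x (f x * Z x)%:E.
  by apply: eq_integral => x _; rewrite /comp abse_EFin ger0_norm ?mulr_ge0.
move/le_trans; apply; apply: lee_wpmul2l; first exact: poweR_ge0.
apply: gt0_ler_poweR;
  rewrite ?invr_ge0 ?(ltW b0)// ?in_itv/= ?leey ?integral_ge0 ?andbT//.
- by move=> x _; rewrite lee_fin powR_ge0.
- by move=> x _; rewrite lee_fin.
apply: ge0_le_integral => //.
- by move=> x _; rewrite lee_fin powR_ge0.
- exact/measurable_EFinP/(measurableT_comp (measurable_powR _) mZ).
- exact/measurable_EFinP.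
move=> x _; rewrite lee_fin.
have [->|Zx0] := eqVneq (Z x) 0%R; first by rewrite powR0 ?gt_eqF.
by rewrite ge1r_powR// lt_neqAle eq_sym Zx0 Z0; case/andP: (Z01 x).
Qed.

End weighted_integrals.

Lemma cmomentE d (T : measurableType d) (R : realType) (P : probability T R)
    (X : T -> R) (p : R) :
  0 < p -> (cmoment P X p < +oo)%E -> cmoment P X p = (nu P X p `^ p)%:E.
Proof.
move=> p0 fin; rewrite /nu -powRrM mulVf ?gt_eqF// powRr1 ?fineK//.
  by rewrite ge0_fin_numE// integral_ge0// => x _; rewrite lee_fin powR_ge0.
by rewrite fine_ge0// integral_ge0// => x _; rewrite lee_fin powR_ge0.
Qed.

Section rho.
Context d (T : measurableType d) (R : realType) (P : probability T R).
Variables (X : T -> R) (p : R).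
Hypotheses (mX : measurable_fun setT X) (p_ge1 : 1 <= p)
  (cmoment_fin : (cmoment P X p < +oo)%E).

Let W t := `|X t - mean P X| `^ p.

Let p_gt0 : 0 < p. Proof. exact: lt_le_trans p_ge1. Qed.

Let W_ge0 t : 0 <= W t. Proof. exact: powR_ge0. Qed.

Let measurable_W : measurable_fun setT W.
Proof.
apply: (measurableT_comp (measurable_powR _)).
by apply: measurableT_comp => //; exact: measurable_funB.
Qed.

Let integral_W : (\int[P]_x (W x)%:E = (nu P X p `^ p)%:E)%E.
Proof. exact: cmomentE. Qed.

Let integrable_W : P.-integrable setT (EFin \o W).
Proof.
apply/integrableP; split; first exact/measurable_EFinP.
under eq_integral do rewrite /comp abse_EFin ger0_norm//.
by rewrite integral_W ltry.
Qed.

Let powRpK a : 0 <= a -> (a `^ p) `^ p^-1 = a.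
Proof. by move=> a0; rewrite -powRrM mulfV ?gt_eqF// powRr1. Qed.

Let powRKp a : 0 <= a -> (a `^ p^-1) `^ p = a.
Proof. by move=> a0; rewrite -powRrM mulVf ?gt_eqF// powRr1. Qed.

Let integral_W_weight_le (Z : T -> R) :
  measurable_fun setT Z -> (forall t, 0 <= Z t <= 1) ->
  (\int[P]_x (W x * Z x)%:E <= (nu P X p `^ p)%:E)%E.
Proof.
move=> mZ Z01; rewrite -integral_W; apply: ge0_le_integral => //.
- by move=> x _; rewrite lee_fin mulr_ge0//; case/andP: (Z01 x).
- by apply/measurable_EFinP; exact: measurable_funM.
- exact/measurable_EFinP.
- by move=> x _; rewrite lee_fin ler_piMr//; case/andP: (Z01 x).
Qed.

Let fine_root_le (y : \bar R) a : 0 <= a -> (0 <= y)%E -> (y <= (a `^ p)%:E)%E ->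
  fine y `^ p^-1 <= a.
Proof.
move=> a0; case: y => [y | | ] //= y0 ya.
by rewrite -(powRpK a0) ge0_ler_powR ?invr_ge0 ?nnegrE ?(ltW p_gt0) ?powR_ge0.
Qed.

Let ubound_rho_set xi b : 0 < nu P X p -> 0 <= b ->
  (forall Z : T -> R, measurable_fun setT Z -> (forall t, 0 <= Z t <= 1) ->
    ('E_P[Z] <= xi%:E)%E ->
    (\int[P]_x (W x * Z x)%:E <= ((b * nu P X p) `^ p)%:E)%E) ->
  ubound (rho_set P X p xi) b.
Proof.
move=> nu0 b0 bound _ [Z [mZ Z01 EZ ->]].
rewrite ler_pdivrMr// fine_root_le ?mulr_ge0 ?powR_ge0 ?bound//.
by apply: integral_ge0 => x _; rewrite lee_fin mulr_ge0//; case/andP: (Z01 x).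
Qed.

Let has_ubound_rho_set xi : 0 < nu P X p -> has_ubound (rho_set P X p xi).
Proof.
move=> nu0; exists 1; apply: ubound_rho_set => // Z mZ Z01 _.
by rewrite mul1r integral_W_weight_le.
Qed.

Let rho_set0 xi : 0 <= xi -> rho_set P X p xi 0.
Proof.
move=> xi0; exists (cst 0); split => //.
- by move=> t; rewrite lexx ler01.
- by rewrite expectation_cst lee_fin.
under eq_integral do rewrite /= mulr0.
by rewrite integral0 /= powR0 ?invr_neq0 ?gt_eqF// mul0r.
Qed.

Lemma rho_le xi b : 0 <= xi -> 0 <= b ->
  (forall Z : T -> R, measurable_fun setT Z -> (forall t, 0 <= Z t <= 1) ->
    ('E_P[Z] <= xi%:E)%E ->
    (\int[P]_x (W x * Z x)%:E <= ((b * nu P X p) `^ p)%:E)%E) ->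
  rho P X p xi <= b.
Proof.
rewrite /rho => xi0 b0 bound; case: ifPn => // nu0.
by apply: ge_sup; [exists 0; exact: rho_set0 | exact: ubound_rho_set].
Qed.

Lemma rho_ge xi (Z : T -> R) : 0 < nu P X p -> measurable_fun setT Z ->
  (forall t, 0 <= Z t <= 1) -> ('E_P[Z] <= xi%:E)%E ->
  fine (\int[P]_x (W x * Z x)%:E)%E `^ p^-1 / nu P X p <= rho P X p xi.
Proof.
move=> nu0 mZ Z01 EZ; rewrite /rho nu0.
by apply: ub_le_sup; [exact: has_ubound_rho_set | exists Z].
Qed.

Lemma rho_ge0 xi : 0 <= xi -> 0 <= rho P X p xi.
Proof.
rewrite /rho => xi0; case: ifPn => // nu0.
by apply: ub_le_sup; [exact: has_ubound_rho_set | exact: rho_set0].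
Qed.

Lemma rho_le1 xi : 0 <= xi -> rho P X p xi <= 1.
Proof.
by move=> xi0; apply: rho_le => // Z mZ Z01 _; rewrite mul1r integral_W_weight_le.
Qed.

Lemma rho_cvg0 : rho P X p xi @[xi --> 0^'+] --> 0.
Proof.
apply/cvgrPdist_le => eps eps0.
have [nu0|nu_le0] := ltP 0 (nu P X p); last first.
  by apply: nearW => xi; rewrite /rho ltNge nu_le0 subrr normr0 ltW.
have [delta delta0 small] := integral_mul_weight_continuous W_ge0 integrable_W
  (powR_gt0 p (mulr_gt0 eps0 nu0)).
near=> xi.
have xi0 : 0 < xi by near: xi; exact: nbhs_right_gt.
have xi_delta : xi <= delta by near: xi; exact: nbhs_right_le.
rewrite sub0r normrN ger0_norm ?rho_ge0 ?(ltW xi0)//.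
apply: rho_le; rewrite ?(ltW xi0) ?(ltW eps0)// => Z mZ Z01 EZ.
apply: small => //; move: EZ; rewrite unlock => /le_trans; apply.
by rewrite lee_fin.
Unshelve. all: by end_near.
Qed.

Let measurable_dev_gt s : measurable [set t | s < `|X t - mean P X|].
Proof.
rewrite -[A in measurable A]setTI -preimage_itvoy.
by apply: measurableT_comp => //; exact: measurable_funB.
Qed.

Let nu_eq0_dev_null : nu P X p = 0 -> P [set t | 0 < `|X t - mean P X|] = 0.
Proof.
move=> nu0; have : (\int[P]_(x in setT) `|(EFin \o W) x| = 0)%E.
  under eq_integral do rewrite /comp abse_EFin ger0_norm//.
  by rewrite integral_W nu0 powR0 ?gt_eqF.
case/(ae_eq_integral_abs P measurableT ((measurable_EFinP _ _).2 measurable_W)).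
move=> N [mN N0 WN].
apply: (subset_measure0 (measurable_dev_gt 0) mN) N0 => t /= Xt.
apply: WN => /(_ I) [] /eqP; rewrite powR_eq0 (gt_eqF p_gt0) andbT.
by rewrite gt_eqF.
Qed.

Let markov_dev (A : set T) s : measurable A -> 0 <= s ->
    (forall t, A t -> s <= `|X t - mean P X|) ->
  ((s `^ p)%:E * P A <= \int[P]_x (W x * \1_A x)%:E)%E.
Proof.
move=> mA s0 As.
have mIA : measurable_fun setT (EFin \o (\1_A : T -> R)).
  exact/measurable_EFinP/measurable_indic.
have IA_ge0 x : setT x -> (0 <= (\1_A x : R)%:E)%E by move=> _; rewrite lee_fin.
rewrite -[A in P A]setIT -(integral_indic P measurableT mA).
rewrite -(ge0_integralZl_EFin P measurableT IA_ge0 mIA (powR_ge0 s p)).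
apply: ge0_le_integral => //.
- by move=> x _; rewrite -EFinM lee_fin mulr_ge0 ?powR_ge0.
- by apply: emeasurable_funM => //; exact/measurable_EFinP/measurable_indic.
- by apply/measurable_EFinP; apply: measurable_funM => //; exact: measurable_indic.
move=> x _; rewrite -EFinM lee_fin indicE.
case: (boolP (x \in A)) => [/set_mem xA|_]; rewrite ?mulr0// !mulr1.
by rewrite ge0_ler_powR ?nnegrE ?(ltW p_gt0) ?As.
Qed.

Let indic_unit (A : set T) t : 0 <= (\1_A t : R) <= 1.
Proof. by rewrite indicE; case: (_ \in _); rewrite /= ?lexx ?ler01. Qed.

Let rho_ge_markov (A : set T) s xi : 0 < nu P X p -> measurable A -> 0 <= s ->
    (forall t, A t -> s * nu P X p <= `|X t - mean P X|) -> (P A <= xi%:E)%E ->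
  s * fine (P A) `^ p^-1 <= rho P X p xi.
Proof.
move=> nu0 mA s0 As PA_xi.
have mIA : measurable_fun setT (\1_A : T -> R) by exact: measurable_indic.
have EA : ('E_P[\1_A] <= xi%:E)%E by rewrite expectation_indic.
apply: le_trans (rho_ge nu0 mIA (indic_unit A) EA).
have snu0 : 0 <= s * nu P X p by rewrite mulr_ge0 ?powR_ge0.
have PAE : P A = (fine (P A))%:E by rewrite fineK// fin_num_measure.
set I := (\int[P]_x (W x * \1_A x)%:E)%E.
have I_ge0 : (0 <= I)%E.
  apply: integral_ge0 => x _.
  by rewrite lee_fin mulr_ge0//; case/andP: (indic_unit A x).
have IE : I = (fine I)%:E.
  rewrite fineK// ge0_fin_numE//.
  by rewrite (le_lt_trans (integral_W_weight_le mIA (indic_unit A))) ?ltry.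
rewrite (ler_pdivlMr _ _ nu0) mulrAC -{1}(powRpK snu0).
rewrite -(powRM _ (powR_ge0 _ _) (fine_ge0 (measure_ge0 P A))).
apply: ge0_ler_powR;
  rewrite ?invr_ge0 ?nnegrE ?mulr_ge0 ?powR_ge0 ?fine_ge0 ?(ltW p_gt0)//.
by rewrite -lee_fin EFinM -PAE -IE markov_dev.
Qed.

Lemma rho_tail (r : R) : 0 < r ->
  (P [set t | (r * nu P X p < `|X t - mean P X|)%R]
    <= (rho P X p (r `^ (- p)) `^ p / r `^ p)%:E)%E.
Proof.
move=> r0; set A := [set t | _].
have [nu0|nu_le0] := ltP 0 (nu P X p); last first.
  have nu_eq0 : nu P X p = 0 by apply/le_anti; rewrite nu_le0 powR_ge0.
  rewrite /rho ltNge nu_le0 /= powR0 ?gt_eqF// mul0r.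
  by rewrite /A nu_eq0 mulr0 nu_eq0_dev_null.
have mA : measurable A by exact: measurable_dev_gt.
have As t : A t -> r * nu P X p <= `|X t - mean P X| := @ltW _ _ _ _.
have rnu0 : 0 <= r * nu P X p by rewrite mulr_ge0 ?powR_ge0 ?(ltW r0).
have rp0 : 0 < r `^ p by rewrite powR_gt0.
have PAE : P A = (fine (P A))%:E by rewrite fineK// fin_num_measure.
have PA0 : 0 <= fine (P A) by rewrite fine_ge0.
have PA_le : (P A <= (r `^ (- p))%:E)%E.
  have mIA : measurable_fun setT (\1_A : T -> R) by exact: measurable_indic.
  have := le_trans (markov_dev mA rnu0 As)
    (integral_W_weight_le mIA (indic_unit A)).
  rewrite PAE -EFinM lee_fin powRM ?powR_ge0 ?(ltW r0)// mulrAC.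
  rewrite -[leRHS]mul1r (ler_pM2r (powR_gt0 p nu0)) => rPA.
  by rewrite lee_fin powRN -(ler_pM2l rp0) mulfV ?gt_eqF.
have rho_bound := rho_ge_markov nu0 mA (ltW r0) As PA_le.
rewrite PAE lee_fin (ler_pdivlMr _ _ rp0) mulrC -{1}(powRKp PA0).
rewrite -(powRM _ (ltW r0) (powR_ge0 _ _)).
apply: ge0_ler_powR rho_bound;
  rewrite ?nnegrE ?(ltW p_gt0) ?mulr_ge0 ?powR_ge0 ?(ltW r0)//.
exact: rho_ge0 (powR_ge0 _ _).
Qed.

Lemma rho_le_moment q kappa : p < q -> 0 <= kappa ->
  (cmoment P X q < +oo)%E -> nu P X q <= kappa * nu P X p ->
  forall xi, 0 < xi -> rho P X p xi <= kappa * xi `^ (p^-1 - q^-1).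
Proof.
move=> pq kappa0 qfin nu_q xi xi0.
have q0 : 0 < q := lt_trans p_gt0 pq.
apply: rho_le; rewrite ?mulr_ge0 ?powR_ge0 ?(ltW xi0)// => Z mZ Z01 EZ.
have [a0 b0 ab] :
    [/\ 0 < q / p, 0 < q / (q - p) & (q / p)^-1 + (q / (q - p))^-1 = 1].
  split; rewrite ?divr_gt0 ?subr_gt0//.
  by rewrite !invf_div; field; rewrite (gt_eqF q0).
apply: le_trans (hoelder_weight P measurable_W mZ W_ge0 Z01 a0 b0 ab) _.
have -> : (\int[P]_x (W x `^ (q / p))%:E = (nu P X q `^ q)%:E)%E.
  apply: eq_trans (cmomentE q0 qfin); apply: eq_integral => x _.
  by rewrite /W -powRrM mulrCA mulfV ?gt_eqF// mulr1.
rewrite poweR_EFin -powRrM mulrAC powRM ?mulr_ge0 ?powR_ge0// EFinM.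
apply: lee_pmul; rewrite ?poweR_ge0 ?lee_fin ?powR_ge0//.
  rewrite invf_div mulrCA mulfV ?gt_eqF// mulr1.
  by rewrite ge0_ler_powR ?nnegrE ?mulr_ge0 ?powR_ge0 ?(ltW p_gt0).
rewrite -powRrM -poweR_EFin (_ : (p^-1 - q^-1) * p = (q / (q - p))^-1); last first.
  by rewrite invf_div; field; rewrite (gt_eqF q0) (gt_eqF p_gt0).
apply: gt0_ler_poweR;
  rewrite ?invr_ge0 ?(ltW b0) ?in_itv/= ?leey ?andbT ?lee_fin ?(ltW xi0)//.
  by apply: integral_ge0 => x _; rewrite lee_fin; case/andP: (Z01 x).
by move: EZ; rewrite unlock.
Qed.

End rho.

Theorem proposition2p1 (d : measure_display) (T : measurableType d)
  (R : realType) (P : probability T R) (X : T -> R) (p : R)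
  (mX : measurable_fun [set: T] X)
  (iX : P.-integrable [set: T] (EFin \o X))
  (hp : 1 <= p)
  (hnu : (cmoment P X p < +oo)%E) :
  [/\ (forall xi : R, 0 < xi -> 0 <= rho P X p xi <= 1),
      rho P X p xi @[xi --> 0^'+] --> 0,
      (forall r : R, 0 < r ->
         (P [set t | (r * nu P X p < `|X t - mean P X|)%R ]
          <= (rho P X p (r `^ (- p)) `^ p / r `^ p)%:E)%E) &
      (forall q kappa : R, p < q -> 0 <= kappa ->
         (cmoment P X q < +oo)%E ->
         nu P X q <= kappa * nu P X p ->
         forall xi : R, 0 < xi ->
           rho P X p xi <= kappa * xi `^ (p^-1 - q^-1))].
Proof.
(* [iX] is not used: the claims hold for any centring constant, in particular
   for the junk value [mean P X] takes when X is not integrable. *)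
split=> [xi xi0 | | r r0 | q kappa pq kappa0 qfin nu_q].
- by rewrite rho_ge0 ?rho_le1 ?(ltW xi0).
- exact: rho_cvg0.
- exact: rho_tail.
- exact: rho_le_moment.
Qed.
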